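(* Let $H$ be a Hintikka tree with induced belief $B$. For all sentences $\varphi, \varphi_1, \varphi_2$ of $L$ and every formula $\psi$ whose only free variable is $x$: (1) $B(\lnot \varphi) = 1 - B(\varphi)$; (2) $B(\varphi_1 \land \varphi_2) \leq \min(B(\varphi_1), B(\varphi_2))$; (3) $\max(B(\varphi_1), B(\varphi_2)) \leq B(\varphi_1 \lor \varphi_2)$; (4) $B((\forall x)\psi) \leq \min_{\delta \in \mathrm{dnf}((\exists x)\lnot\psi)} \{1 - B(\delta)\}$; (5) $\max_{\delta \in \mathrm{dnf}((\exists x)\psi)} \{B(\delta)\} \leq B((\exists x)\psi)$.
   Context: $L$ is a first-order language without equality with finitely many predicate symbols and no function or constant symbols. For $d \in \mathbb{N}$, $\Delta^{(d)}$ is the finite set of Hintikka constituents of depth $d$ with no free variables ($\Delta^{(0)} = \{\top\}$); every sentence $\varphi$ of quantifier depth $d$ is logically equivalent to the disjunction of a set $\mathrm{dnf}(\varphi) \subseteq \Delta^{(d)}$ (its Hintikka distributive normal form of depth $d$); each constituent is itself a sentence. $\mathrm{expand}(1,\delta^{(d)})\subseteq\Delta^{(d+1)}$ denotes the expansions of $\delta^{(d)}$. Refinement tree: on $\Delta = \bigcup_d \Delta^{(d)}$ put an edge from each $\delta^{(d)}$ to each member of $\mathrm{expand}(1,\delta^{(d)})$, keeping a constituent lying in several depth-$d$ expansions as child of only one of them. A Hintikka tree is a function $H: \Delta \to [0,1]$ with $H(\delta^{(0)}) = 1$ and $H(\delta) = \sum_{\delta' \text{ child of } \delta} H(\delta')$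 for all $\delta$. Let $\Psi^\omega$ be the set of infinite root paths in the refinement tree with the topology generated by cylinders $[\delta^{(0)}\cdots\delta^{(d)}]$, and $\beta$ the unique Borel probability measure with $\beta([\delta^{(0)}\cdots\delta^{(d)}]) = H(\delta^{(d)})$. The belief in a sentence $\varphi$ of depth $d$ is $B(\varphi) = \sum_{\delta^{(d)} \in \mathrm{dnf}(\varphi)} \beta([\delta^{(0)} \cdots \delta^{(d)}])$, where $\delta^{(0)}\cdots\delta^{(d)}$ is the root path to $\delta^{(d)}$. *)

From HB Require Import structures.
From mathcomp Require Import all_boot all_order all_algebra.
From mathcomp Require Import reals.
Set Implicit Arguments. Unset Strict Implicit. Unset Printing Implicit Defensive.
Import Order.TTheory GRing.Theory Num.Theory.

(* The language L: m predicate symbols, symbol i of arity ar i; no     *)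
(* function or constant symbols, no equality.  Variables are nats.     *)

Inductive fform (m : nat) (ar : 'I_m -> nat) : Type :=
  | FTop : fform ar
  | FAtom (i : 'I_m) (args : (ar i).-tuple nat) : fform ar
  | FNeg : fform ar -> fform ar
  | FAnd : fform ar -> fform ar -> fform ar
  | FOr : fform ar -> fform ar -> fform ar
  | FEx (x : nat) : fform ar -> fform ar
  | FAll (x : nat) : fform ar -> fform ar.
Arguments FTop {m ar}.

Fixpoint qdepth m (ar : 'I_m -> nat) (f : fform ar) : nat :=
  match f with
  | FTop | FAtom _ _ => 0
  | FNeg g => qdepth g
  | FAnd g h | FOr g h => maxn (qdepth g) (qdepth h)
  | FEx _ g | FAll _ g => (qdepth g).+1
  end.

Fixpoint fv m (ar : 'I_m -> nat) (f : fform ar) : seq nat :=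
  match f with
  | FTop => [::]
  | FAtom _ args => tval args
  | FNeg g => fv g
  | FAnd g h | FOr g h => fv g ++ fv h
  | FEx x g | FAll x g => [seq y <- fv g | y != x]
  end.

Definition sentence m (ar : 'I_m -> nat) (f : fform ar) : bool := fv f == [::].

(* Hintikka constituents.  Bound variables are numbered by levels      *)
(* 0,1,2,...; the variable introduced at level k is the nat k.         *)
(* An atom "of level k" is an atom whose arguments are among the       *)
(* variables 0..k and which mentions the newest variable k.            *)

Definition atomT m (ar : 'I_m -> nat) (n : nat) : finType :=
  {i : 'I_m & {ffun 'I_(ar i) -> 'I_n}}.

Definition is_new m (ar : 'I_m -> nat) (k : nat) (a : atomT ar k.+1) : bool :=
  [exists j, tagged a j == ord_max].

Definition newAtom m (ar : 'I_m -> nat) (k : nat) : finType :=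
  {a : atomT ar k.+1 | is_new a}.

Definition apart m (ar : 'I_m -> nat) (k : nat) : finType :=
  {ffun newAtom ar k -> bool}.

(* ct ar k d : attributive constituents of depth d describing the      *)
(* variable of level k (given the variables of levels < k):            *)
(*   depth 0   : an atomic part                                        *)
(*   depth d+1 : an atomic part and a set of depth-d constituents of   *)
(*               level k+1 (those realized by some value of the next   *)
(*               variable).                                            *)
Fixpoint ct m (ar : 'I_m -> nat) (k d : nat) {struct d} : finType :=
  match d with
  | 0 => apart ar k
  | d'.+1 => (apart ar k * {set ct ar k.+1 d'})%type
  end.

(* Delta^(d): constituents of depth d without free variables. *)
Definition constituent m (ar : 'I_m -> nat) (d : nat) : finType :=
  match d with
  | 0 => unit
  | d'.+1 => {set ct ar 0 d'}
  end.

Definition bigAnd m (ar : 'I_m -> nat) (s : seq (fform ar)) : fform ar :=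
  foldr (@FAnd m ar) FTop s.
Definition bigOr m (ar : 'I_m -> nat) (s : seq (fform ar)) : fform ar :=
  foldr (@FOr m ar) (FNeg FTop) s.

Definition atom_form m (ar : 'I_m -> nat) k (a : newAtom ar k) : fform ar :=
  @FAtom m ar (tag (val a)) [tuple val (tagged (val a) j) | j < ar (tag (val a))].

Definition apart_form m (ar : 'I_m -> nat) k (A : apart ar k) : fform ar :=
  bigAnd [seq (if A a then atom_form a else FNeg (atom_form a)) | a <- enum (newAtom ar k)].

Fixpoint ct_form m (ar : 'I_m -> nat) (k d : nat) {struct d} : ct ar k d -> fform ar :=
  match d return ct ar k d -> fform ar with
  | 0 => fun A => apart_form A
  | d'.+1 => fun p =>
      FAnd (apart_form p.1)
        (FAnd (bigAnd [seq FEx k.+1 (ct_form c) | c <- enum p.2])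
              (FAll k.+1 (bigOr [seq ct_form c | c <- enum p.2])))
  end.

Definition csent m (ar : 'I_m -> nat) (d : nat) : constituent ar d -> fform ar :=
  match d return constituent ar d -> fform ar with
  | 0 => fun _ => FTop
  | d'.+1 => fun G =>
      FAnd (bigAnd [seq FEx 0 (ct_form c) | c <- enum G])
           (FAll 0 (bigOr [seq ct_form c | c <- enum G]))
  end.

Fixpoint ct_trunc m (ar : 'I_m -> nat) (k d : nat) {struct d} :
    ct ar k d.+1 -> ct ar k d :=
  match d return ct ar k d.+1 -> ct ar k d with
  | 0 => fun p => p.1
  | d'.+1 => fun p => (p.1, [set ct_trunc x | x in p.2])
  end.

Definition reduct m (ar : 'I_m -> nat) (d : nat) :
    constituent ar d.+1 -> constituent ar d :=
  match d return constituent ar d.+1 -> constituent ar d with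
  | 0 => fun _ => tt
  | d'.+1 => fun G => [set ct_trunc x | x in G]
  end.

Definition expand1 m (ar : 'I_m -> nat) (d : nat) (delta : constituent ar d) :
    {set constituent ar d.+1} :=
  [set delta' | reduct delta' == delta].

(* A constituent is read as a finite "type tree"; a formula is          *)
(* evaluated on it by: Exists = some child, Forall = every child,       *)
(* atoms = the recorded atomic parts.  dnf(phi) is the set of depth-    *)
(* qdepth(phi) constituents on which phi evaluates to true.             *)

Inductive tree (m : nat) : Type :=
  Node : ('I_m -> seq nat -> bool) -> seq (tree m) -> tree m.

(* atomic part as a predicate on (symbol, argument levels) *)
Definition asg m (ar : 'I_m -> nat) k (A : apart ar k) (i : 'I_m) (s : seq nat) : bool :=
  [&& size s == ar i, all (fun n => n <= k) s &
      match insub (@existT 'I_m (fun i => {ffun 'I_(ar i) -> 'I_k.+1}) i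
                     [ffun j : 'I_(ar i) => inord (nth 0 s j)] : atomT ar k.+1)
      with Some a => A a | None => false end].

Fixpoint ct_tree m (ar : 'I_m -> nat) (k d : nat) {struct d} : ct ar k d -> tree m :=
  match d return ct ar k d -> tree m with
  | 0 => fun A => Node (asg A) [::]
  | d'.+1 => fun p => Node (asg p.1) [seq ct_tree c | c <- enum p.2]
  end.

Definition root_children m (ar : 'I_m -> nat) (d : nat) : constituent ar d -> seq (tree m) :=
  match d return constituent ar d -> seq (tree m) with
  | 0 => fun _ => [::]
  | d'.+1 => fun G => [seq ct_tree c | c <- enum G]
  end.

(* st: atomic parts of the nodes along the current path (index = level);
   env: level assigned to each bound variable; ch: current children. *)
Fixpoint ev m (ar : 'I_m -> nat) (st : seq ('I_m -> seq nat -> bool))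
    (env : nat -> option nat) (ch : seq (tree m)) (f : fform ar) : bool :=
  match f with
  | FTop => true
  | FAtom i args =>
      let ol := [seq env v | v <- tval args] in
      if all (fun o => o != None) ol then
        let ls := [seq odflt 0 o | o <- ol] in
        nth (fun _ _ => false) st (foldr maxn 0 ls) i ls
      else false
  | FNeg g => ~~ ev st env ch g
  | FAnd g h => ev st env ch g && ev st env ch h
  | FOr g h => ev st env ch g || ev st env ch h
  | FEx x g => has (fun t => let: Node A ch' := t in
        ev (rcons st A) (fun y => if y == x then Some (size st) else env y) ch' g) ch
  | FAll x g => all (fun t => let: Node A ch' := t in
        ev (rcons st A) (fun y => if y == x then Some (size st) else env y) ch' g) ch
  end.

Definition dnf m (ar : 'I_m -> nat) (phi : fform ar) : {set constituent ar (qdepth phi)} :=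
  [set delta | ev [::] (fun _ => None) (root_children delta) phi].

(* Refinement tree: the children of delta are expand1 delta (each       *)
(* depth-(d+1) constituent has exactly one reduct, hence one parent).   *)
Local Open Scope ring_scope.

Definition hintikka_tree (R : realType) m (ar : 'I_m -> nat)
    (H : forall d, constituent ar d -> R) : Prop :=
  [/\ (forall d (delta : constituent ar d), 0 <= H d delta <= 1),
      H 0 tt = 1 &
      forall d (delta : constituent ar d),
        H d delta = \sum_(delta' in expand1 delta) H d.+1 delta'].

(* beta([delta^(0) ... delta^(d)]) = H(delta^(d)) by definition of beta, *)
(* so B(phi) = sum over dnf(phi) of H.                                  *)
Definition belief (R : realType) m (ar : 'I_m -> nat)
    (H : forall d, constituent ar d -> R) (phi : fform ar) : R :=
  \sum_(delta in dnf phi) H (qdepth phi) delta.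

From HB Require Import structures.
From mathcomp Require Import all_boot all_order all_algebra.
From mathcomp Require Import reals.
From Stdlib Require List.
Import Order.TTheory GRing.Theory Num.Theory.
Set Implicit Arguments. Unset Strict Implicit. Unset Printing Implicit Defensive.

(* A formula of depth at most [q] cannot distinguish two nodes whose successor lists are
   back-and-forth equivalent to depth [q].  A constituent and its reduct are equivalent to
   the depth of the reduct, so, by additivity of [H] over expansions, the total weight of
   the constituents satisfying [phi] is the same at every depth [d >= qdepth phi].  At a
   common depth belief is the mass of a probability distribution on constituents; it is
   therefore monotone under entailment and complementary under negation.  Finally,
   [csent delta] determines its models up to equivalence of the depth of [delta]: every
   constituent satisfying it agrees with [delta] on all formulas of that depth, which
   yields (4) and (5) from [delta |= (exists x) ~psi] and [delta |= (exists x) psi]. *)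

Section ListIn.
Variable T : Type.

Lemma has_In (p : pred T) (s : seq T) : has p s <-> exists2 t, List.In t s & p t.
Proof.
elim: s => [|x s IH] /=; first by split=> // -[].
split=> [/orP[px|/IH[t ht pt]]|[t [<-|ht] pt]].
- by exists x; [left|].
- by exists t; [right|].
- by rewrite pt.
- by apply/orP; right; apply/IH; exists t.
Qed.

Lemma all_In (p : pred T) (s : seq T) : all p s <-> forall t, List.In t s -> p t.
Proof.
elim: s => [|x s IH] //=.
split=> [/andP[px /IH ps] t [<-|/ps]|ps] //.
apply/andP; split; first by apply: ps; left.
by apply/IH => t ht; apply: ps; right.
Qed.

Lemma In_map (U : eqType) (f : U -> T) x s : x \in s -> List.In (f x) [seq f y | y <- s].
Proof. by elim: s => //= y s IH; rewrite inE => /orP[/eqP->|/IH]; [left|right]. Qed.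

Lemma In_mapP (U : eqType) (f : U -> T) t s :
  List.In t [seq f y | y <- s] -> exists2 x, x \in s & t = f x.
Proof.
elim: s => //= y s IH [<-|/IH[x xs ->]]; first by exists y; rewrite ?mem_head.
by exists x; rewrite // inE xs orbT.
Qed.

End ListIn.

(* Maximal implicits, so that [In_mapP] can be used as a view. *)
Arguments In_mapP {T U f t s}.

Section Bisimulation.
Variable m : nat.

Definition lift_rel (r : tree m -> tree m -> Prop) (c1 c2 : seq (tree m)) : Prop :=
  (forall t1, List.In t1 c1 -> exists2 t2, List.In t2 c2 & r t1 t2) /\
  (forall t2, List.In t2 c2 -> exists2 t1, List.In t1 c1 & r t1 t2).

Definition same_root (r : seq (tree m) -> seq (tree m) -> Prop) (t1 t2 : tree m) : Prop :=
  let: Node A1 ch1 := t1 in let: Node A2 ch2 := t2 in A1 = A2 /\ r ch1 ch2.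

(* Compares successor lists only: the atomic parts of the current nodes are already on
   the stack [st] of [ev]. *)
Fixpoint bisim (q : nat) (c1 c2 : seq (tree m)) : Prop :=
  if q is q'.+1 then lift_rel (same_root (bisim q')) c1 c2 else True.

Section LiftRel.
Variables (r : tree m -> tree m -> Prop) (p1 p2 : pred (tree m)).
Hypothesis r_p : forall t1 t2, r t1 t2 -> p1 t1 = p2 t2.

Lemma lift_rel_has c1 c2 : lift_rel r c1 c2 -> has p1 c1 = has p2 c2.
Proof.
case=> r12 r21; apply/idP/idP => [/has_In[t1 /r12[t2 ht2 rt] pt1]|/has_In[t2 /r21[t1 ht1 rt] pt2]].
  by apply/has_In; exists t2; rewrite -?(r_p rt).
by apply/has_In; exists t1; rewrite ?(r_p rt).
Qed.

Lemma lift_rel_all c1 c2 : lift_rel r c1 c2 -> all p1 c1 = all p2 c2.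
Proof.
case=> r12 r21; apply/idP/idP => [/all_In p1c1|/all_In p2c2].
  by apply/all_In => t2 /r21[t1 /p1c1 pt1 /r_p <-].
by apply/all_In => t1 /r12[t2 /p2c2 pt2 /r_p ->].
Qed.

End LiftRel.

Lemma lift_rel_imset (T U : finType) (f : T -> U) (g : T -> tree m) (h : U -> tree m)
    (r : tree m -> tree m -> Prop) (S : {set T}) :
  (forall x, r (g x) (h (f x))) ->
  lift_rel r [seq g x | x <- enum S] [seq h y | y <- enum (f @: S)].
Proof.
move=> rgh; split=> t ht; have [z] := In_mapP ht; rewrite mem_enum.
  by move=> zS ->; exists (h (f z)) => //; apply: In_map; rewrite mem_enum imset_f.
by case/imsetP=> x xS -> ->; exists (g x) => //; apply: In_map; rewrite mem_enum.
Qed.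

End Bisimulation.

Section Evaluation.
Variables (m : nat) (ar : 'I_m -> nat).
Implicit Types (f g : fform ar) (ch : seq (tree m)).

Lemma ev_bisim f q st env c1 c2 :
  (qdepth f <= q)%N -> bisim q c1 c2 -> ev st env c1 f = ev st env c2 f.
Proof.
elim: f q st env c1 c2 => [|i args|g IH|g IHg h IHh|g IHg h IHh|x g IH|x g IH] q st env c1 c2 //=.
- by move=> hq hb; rewrite (IH q _ _ _ c2).
- by rewrite geq_max => /andP[hg hh] hb; rewrite (IHg q _ _ _ c2) // (IHh q _ _ _ c2).
- by rewrite geq_max => /andP[hg hh] hb; rewrite (IHg q _ _ _ c2) // (IHh q _ _ _ c2).
- case: q => // q hq; apply: lift_rel_has => -[A1 ch1] [A2 ch2] [<-]; exact: IH.
- case: q => // q hq; apply: lift_rel_all => -[A1 ch1] [A2 ch2] [<-]; exact: IH.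
Qed.

Lemma ev_and st env ch f g : ev st env ch (FAnd f g) = ev st env ch f && ev st env ch g.
Proof. by []. Qed.

Lemma ev_ex st env ch x g : ev st env ch (FEx x g) =
  has (fun t => let: Node A ch' := t in
        ev (rcons st A) (fun y => if y == x then Some (size st) else env y) ch' g) ch.
Proof. by []. Qed.

Lemma ev_all st env ch x g : ev st env ch (FAll x g) =
  all (fun t => let: Node A ch' := t in
        ev (rcons st A) (fun y => if y == x then Some (size st) else env y) ch' g) ch.
Proof. by []. Qed.

Lemma ev_all_ex st env ch x g : ev st env ch (FAll x g) = ~~ ev st env ch (FEx x (FNeg g)).
Proof. by elim: ch => //= -[A c] s ->; rewrite negb_or negbK. Qed.

Lemma ev_bigAnd st env ch (s : seq (fform ar)) : ev st env ch (bigAnd s) = all (ev st env ch) s.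
Proof. by elim: s => //= f s ->. Qed.

Lemma ev_bigOr st env ch (s : seq (fform ar)) : ev st env ch (bigOr s) = has (ev st env ch) s.
Proof. by elim: s => //= f s ->. Qed.

End Evaluation.

Section Constituents.
Variables (m : nat) (ar : 'I_m -> nat).

Definition models d (delta : constituent ar d) (phi : fform ar) : bool :=
  ev [::] (fun _ => None) (root_children delta) phi.

Lemma same_root_trunc d k (c : ct ar k d.+1) :
  same_root (bisim d) (ct_tree c) (ct_tree (ct_trunc c)).
Proof.
by elim: d k c => [|d IHd] k [A S] //=; split=> //; apply: lift_rel_imset (IHd k.+1).
Qed.

Lemma models_reduct d (delta : constituent ar d.+1) phi :
  (qdepth phi <= d)%N -> models delta phi = models (reduct delta) phi.
Proof.
move=> hq; apply: ev_bisim hq _.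
by case: d delta => [|d] delta //=; apply: lift_rel_imset (@same_root_trunc d 0).
Qed.

Definition is_level_env (n : nat) (env : nat -> option nat) : Prop :=
  forall y, env y = if (y < n)%N then Some y else None.

Lemma is_level_env_push T n env (st : seq T) : is_level_env n env -> size st = n ->
  is_level_env n.+1 (fun y => if y == n then Some (size st) else env y).
Proof. by move=> he hs y; rewrite he hs ltnS (leq_eqVlt y); case: (y =P n) => [->|]. Qed.

Lemma foldr_maxn_eq k (s : seq nat) : all (leq^~ k) s -> k \in s -> foldr maxn 0%N s = k.
Proof.
move=> sk ks; rewrite foldrE; apply/eqP; rewrite eqn_leq (leq_bigmax_seq k) // andbT.
by apply/bigmax_leqP_seq => i /(allP sk).
Qed.

Lemma ev_atom_form k st (A : apart ar k) env ch (a : newAtom ar k) :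
  size st = k -> is_level_env k.+1 env ->
  ev (rcons st (asg A)) env ch (atom_form a) = A a.
Proof.
move=> hs he; case: a => [[i f] fnew] /=.
rewrite /atom_form /= -map_comp.
have -> : [seq env (val (f j)) | j <- enum 'I_(ar i)] =
          [seq Some (val (f j)) | j <- enum 'I_(ar i)].
  by apply: eq_map => j; rewrite /= he ltn_ord.
rewrite all_map (@eq_all _ _ predT) // all_predT -map_comp.
set ls := [seq val (f j) | j <- enum 'I_(ar i)].
have ls_le : all (leq^~ k) ls by apply/allP => _ /mapP[j _ ->]; rewrite -ltnS ltn_ord.
have [jk /eqP fjk] := existsP fnew.
(* A new atom mentions variable [k], so [ev] reads it in the atomic part of level [k]. *)
rewrite (@foldr_maxn_eq k) //; last by apply/mapP; exists jk; rewrite ?mem_enum // fjk.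
rewrite nth_rcons hs ltnn eqxx /asg size_map size_enum_ord eqxx ls_le /=.
have -> : [ffun j : 'I_(ar i) => inord (nth 0%N ls j)] = f :> {ffun 'I_(ar i) -> 'I_k.+1}.
  by apply/ffunP => j; rewrite ffunE (nth_map j) ?size_enum_ord // nth_ord_enum inord_val.
by rewrite insubT.
Qed.

Lemma ev_apart_form k st (A0 A : apart ar k) env ch :
  size st = k -> is_level_env k.+1 env ->
  ev (rcons st (asg A0)) env ch (apart_form A) -> A0 = A.
Proof.
move=> hs he; rewrite /apart_form ev_bigAnd all_map => /allP hA.
apply/ffunP => a.
have : ev (rcons st (asg A0)) env ch (if A a then atom_form a else FNeg (atom_form a)).
  exact: hA a (mem_enum _ a).
by rewrite -(ev_atom_form A0 ch a hs he); case: (A a) => //= /negbTE.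
Qed.

Definition is_ct_tree k (t : tree m) : Prop := exists d (c : ct ar k d), t = ct_tree c.

Lemma is_ct_tree_node k t : is_ct_tree k t ->
  exists (A : apart ar k) (ch : seq (tree m)),
    t = Node (asg A) ch /\ forall t', List.In t' ch -> is_ct_tree k.+1 t'.
Proof.
case=> -[|d] [c ->]; first by exists c, [::].
exists c.1, [seq ct_tree c' | c' <- enum c.2]; split=> // _ /In_mapP[c' _ ->].
by exists d, c'.
Qed.

Definition ct_form_complete_at d : Prop :=
  forall k (c : ct ar k d) st env (A : apart ar k) ch,
    size st = k -> is_level_env k.+1 env -> (forall t, List.In t ch -> is_ct_tree k.+1 t) ->
    ev (rcons st (asg A)) env ch (ct_form c) -> same_root (bisim d) (Node (asg A) ch) (ct_tree c).

Lemma bisim_of_ev_children d k (S : {set ct ar k d}) st env ch :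
  ct_form_complete_at d -> size st = k -> is_level_env k env ->
  (forall t, List.In t ch -> is_ct_tree k t) ->
  ev st env ch (FAnd (bigAnd [seq FEx k (ct_form c) | c <- enum S])
                     (FAll k (bigOr [seq ct_form c | c <- enum S]))) ->
  bisim d.+1 ch [seq ct_tree c | c <- enum S].
Proof.
move=> hcomplete hs he hch.
rewrite ev_and ev_bigAnd ev_all all_map => /andP[/allP hex /all_In hall].
have he' := is_level_env_push he hs.
split=> [t1 ht1|_ /In_mapP[c cS ->]].
  have [A1 [ch1 [def_t1 hch1]]] := is_ct_tree_node (hch t1 ht1).
  move: (hall t1 ht1); rewrite def_t1 ev_bigOr has_map => /hasP[c cS hc].
  by exists (ct_tree c); [exact: In_map | exact: hcomplete hs he' hch1 hc].
have : ev st env ch (FEx k (ct_form c)) := hex c cS.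
rewrite ev_ex => /has_In[t1 ht1].
have [A1 [ch1 [def_t1 hch1]]] := is_ct_tree_node (hch t1 ht1); rewrite def_t1 => hc.
by exists (Node (asg A1) ch1); [rewrite -def_t1 | exact: hcomplete hs he' hch1 hc].
Qed.

Lemma ct_form_complete d : ct_form_complete_at d.
Proof.
elim: d => [|d IH] k c st env A ch hs he hch /=; first by move/ev_apart_form ->.
case: c => A' S /andP[/ev_apart_form -> // hS]; split=> //.
by apply: bisim_of_ev_children hS => //; rewrite size_rcons hs.
Qed.

Lemma models_csent d (delta : constituent ar d) D (delta' : constituent ar D) phi :
  (qdepth phi <= d)%N -> models delta' (csent delta) -> models delta' phi = models delta phi.
Proof.
move=> hq hcsent; apply: ev_bisim hq _.
case: d delta hcsent => [//|d delta hcsent].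
apply: bisim_of_ev_children hcsent => //; first exact: ct_form_complete.
by case: D delta' => [|D] delta' t //= /In_mapP[c _ ->]; exists D, c.
Qed.

End Constituents.

Local Open Scope ring_scope.

Section Belief.
Variables (R : realType) (m : nat) (ar : 'I_m -> nat) (H : forall d, constituent ar d -> R).
Hypothesis hH : hintikka_tree H.

Definition belief_at (phi : fform ar) d : R :=
  \sum_(delta : constituent ar d | models delta phi) H delta.

Lemma hintikka_sum1 d : \sum_(delta : constituent ar d) H delta = 1.
Proof.
have [_ H_root H_expand] := hH; elim: d => [|d IH]; first by rewrite (big_pred1 tt) // => -[].
rewrite (partition_big (@reduct m ar d) predT) //= -IH; apply: eq_bigr => delta _.
by rewrite H_expand; apply: eq_bigl => delta'; rewrite inE.
Qed.

Lemma belief_at_succ phi d : (qdepth phi <= d)%N -> belief_at phi d.+1 = belief_at phi d.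
Proof.
have [_ _ H_expand] := hH; move=> hq.
rewrite /belief_at (partition_big (@reduct m ar d) predT) //= [RHS]big_mkcond.
apply: eq_bigr => delta _; rewrite H_expand.
under eq_bigl => delta' do rewrite (models_reduct _ hq) andbC.
case: ifP => hdelta; last by rewrite big_pred0 // => delta'; case: eqP => // ->.
by apply: eq_bigl => delta'; rewrite inE; case: eqP => // ->.
Qed.

Lemma belief_at_qdepth phi : belief_at phi (qdepth phi) = belief H phi.
Proof. by apply: eq_bigl => delta; rewrite inE. Qed.

Lemma belief_atE phi d : (qdepth phi <= d)%N -> belief_at phi d = belief H phi.
Proof.
move=> /subnK <-; elim: (d - qdepth phi)%N => [|n IH]; first exact: belief_at_qdepth.
by rewrite addSn belief_at_succ // leq_addl.
Qed.

Lemma belief_neg phi : belief H (FNeg phi) = 1 - belief H phi.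
Proof.
rewrite -!belief_at_qdepth /= -(hintikka_sum1 (qdepth phi)).
by rewrite [in RHS](bigID (fun delta : constituent ar _ => models delta phi)) /= addrC addrK.
Qed.

Lemma belief_le f g :
  (forall d (delta : constituent ar d), models delta f -> models delta g) ->
  belief H f <= belief H g.
Proof.
have [H_bound _ _] := hH; move=> fg.
rewrite -(belief_atE (leq_maxl (qdepth f) (qdepth g))).
rewrite -(belief_atE (leq_maxr (qdepth f) (qdepth g))).
rewrite /belief_at big_mkcond [X in _ <= X]big_mkcond; apply: ler_sum => delta _.
case: ifP => [/fg -> //|_]; case: ifP => // _.
by case/andP: (H_bound _ delta).
Qed.

End Belief.

Unset Implicit Arguments.

Theorem mainTheorem6 (R : realType) (m : nat) (ar : 'I_m -> nat)
  (ar_pos : forall i, (0 < ar i)%N)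
  (H : forall d, constituent ar d -> R) :
  hintikka_tree H ->
  let B := belief H in
  forall (phi phi1 phi2 : fform ar) (x : nat) (psi : fform ar),
    sentence phi -> sentence phi1 -> sentence phi2 ->
    {subset fv psi <= [:: x]} ->
    [/\ B (FNeg phi) = 1 - B phi,
        B (FAnd phi1 phi2) <= Num.min (B phi1) (B phi2),
        Num.max (B phi1) (B phi2) <= B (FOr phi1 phi2),
        (forall delta, delta \in dnf (FEx x (FNeg psi)) ->
           B (FAll x psi) <= 1 - B (csent delta)) &
        (forall delta, delta \in dnf (FEx x psi) ->
           B (csent delta) <= B (FEx x psi))].
Proof.
move=> hH B phi phi1 phi2 x psi _ _ _ _; rewrite /B; split.
- exact: belief_neg.
- by rewrite le_min; apply/andP; split; apply: belief_le => // d delta; case/andP.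
- rewrite ge_max; apply/andP; split; apply: belief_le => // d delta h; apply/orP.
  + by left.
  + by right.
- move=> delta; rewrite inE => hdelta; rewrite -belief_neg //.
  apply: belief_le => // D delta'; apply: contraTN.
  move/(models_csent (phi := FAll x psi) (leqnn _)) ->.
  by rewrite /models ev_all_ex hdelta.
- move=> delta; rewrite inE => hdelta.
  by apply: belief_le => // D delta' /(models_csent (phi := FEx x psi) (leqnn _)) ->.
Qed.
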